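(* Let $q$ be a prime power, $e\in\{0,1,2\}$, $r$ an integer ($r$ odd if $e\in\{0,2\}$, $r$ even if $e=1$), and let $\{\Sigma_1,\dots,\Sigma_{N+1}\}$, $N=q^{\frac{r+e+1}{2}}$, be a spread of a non-degenerate quadric $\mathcal Q_{r+2,e}$ of ${\rm PG}(r+2,q)$ with associated polarity $\perp$. Fix a point $P\in\Sigma_{N+1}$ and a hyperplane $\mathcal U\cong{\rm PG}(r+1,q)$ of ${\rm PG}(r+2,q)$ with $P\notin\mathcal U$. Put $H=\mathcal U\cap P^\perp$ (an $r$-space, a hyperplane of $\mathcal U$), and $S_i=\langle P,\Sigma_i\rangle\cap\mathcal U$ for $i=1,\dots,N$. Then $\mathcal P=\{S_1,\dots,S_N\}$ is a hyperbolic, parabolic or elliptic avsp of $\mathcal U$ (with respect to the hyperplane $H$ and the quadric $\mathcal Q_{r,e}=H\cap\mathcal Q_{r+2,e}$, with fixed generator $\Pi=\Sigma_{N+1}\cap H$), according as $e=0,1,2$ respectively.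
   Context: Notation: $\mathcal Q_{m,e}$ denotes a non-degenerate quadric of ${\rm PG}(m,q)$ which is hyperbolic $\mathcal Q^+(m,q)$ if $e=0$ ($m$ odd), parabolic $\mathcal Q(m,q)$ if $e=1$ ($m$ even), elliptic $\mathcal Q^-(m,q)$ if $e=2$ ($m$ odd). The polarity $\perp$ associated with the quadric is the one defined by the polar (bilinear) form of the quadratic form; for a point $P$ of the quadric, $P^\perp$ is its tangent hyperplane. A generator of $\mathcal Q_{m,e}$ is a projective subspace of maximal dimension contained in it; generators are $\frac{m-e-1}{2}$-dimensional. A spread of $\mathcal Q_{m,e}$ is a set of $q^{\frac{m+e-1}{2}}+1$ pairwise disjoint generators. An $s$-space means an $s$-dimensional projective subspace. Affine vector space partition (avsp): given a hyperplane $H$ of ${\rm PG}(r+1,q)$, an avsp (with respect to $H$) is a set $\mathcal P$ of subspaces, none contained in $H$, such that every point of ${\rm PG}(r+1,q)\setminus H$ lies in exactly one member of $\mathcal P$. Hyperbolic/parabolic/elliptic avsp: with $e=0,1,2$ respectively, an avsp $\mathcal P=\{S_1,\dots,S_N\}$ of ${\rm PG}(r+1,q)$ with respect to $H$, where $N=q^{\frac{r+e+1}{2}}$ and every $S_i$ is a $\frac{r-e+1}{2}$-space, such that the sets $\Pi_i=S_i\cap H$ are $N$ generators of a non-degenerate quadric $\mathcal Q_{r,e}\subset H$ with: (1) each $\Pi_i$ disjoint from a fixed generator $\Pi$ of $\mathcal Q_{r,e}$; (2) distinct $S_i,S_j$ meet in at most one point, and distinct $\Pi_i,\Pi_j$ meet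 in at most one point; (3) if $|\Pi_i\cap\Pi_j|=1$, then $\langle S_i,S_j\rangle\cap\mathcal Q_{r,e}$ is a non-degenerate hyperbolic quadric $\mathcal Q^+(r-e,q)$. *)

From HB Require Import structures.
From mathcomp Require Import all_boot all_order all_algebra all_field.
Set Implicit Arguments. Unset Strict Implicit. Unset Printing Implicit Defensive.
Import GRing.Theory.
Local Open Scope ring_scope.

(* PG(n-1,q) = lattice of subspaces of V = 'rV[F]_n, F finite field with q = #|F|.
   A projective s-space is a vector subspace of dimension s+1; a point is a
   1-dimensional subspace. Quadrics are given by a matrix A: Q(x) = x A x^T
   (every quadratic form has this shape, also in characteristic 2). *)

Section QuadricDefs.
Variables (F : finFieldType) (n : nat).
Implicit Types (A : 'M[F]_n) (x y : 'rV[F]_n) (W T G U H X : {vspace 'rV[F]_n}).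

Definition qf A x : F := (x *m A *m x^T) 0 0.
Definition polar A x y : F := qf A (x + y) - qf A x - qf A y.

Definition perp A X : {vspace 'rV[F]_n} :=
  <<[seq y <- enum 'rV[F]_n | [forall x : 'rV[F]_n, (x \in X) ==> (polar A x y == 0%R)]]>>%VS.

Definition tsing A T := forall x, x \in T -> qf A x = 0.

Definition nondeg_on A W :=
  forall x, x \in W -> x != 0 -> (forall y, y \in W -> polar A x y = 0) -> qf A x != 0.

Definition generator A W G :=
  [/\ (G <= W)%VS, tsing A G &
      forall T, (T <= W)%VS -> tsing A T -> (\dim T <= \dim G)%N].

(* W is an m-space and W cap Q is a non-degenerate quadric Q_{m,e} of W:
   generators are (m-e-1)/2-dimensional (projective). *)
Definition quadric_type A W (m e : nat) :=
  [/\ \dim W = m.+1, nondeg_on A W &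
      exists G, generator A W G /\ (2 * \dim G + e = m.+1)%N].

Definition avsp (k : nat) U H (S : 'I_k -> {vspace 'rV[F]_n}) :=
  [/\ (H <= U)%VS, (\dim H).+1 = \dim U,
      forall i, (S i <= U)%VS /\ ~~ (S i <= H)%VS &
      forall x, x \in U -> x \notin H -> exists! i, x \in S i].

Definition quadric_avsp (r e : nat) A U H Pi
    (S : 'I_(#|F| ^ ((r + e + 1)./2)) -> {vspace 'rV[F]_n}) :=
  [/\ \dim U = r.+2, avsp U H S,
      (forall i, \dim (S i) = ((r + 3 - e)./2)%N),
      quadric_type A H r e & generator A H Pi] /\
  [/\ (forall i, generator A H (S i :&: H)%VS),
      (forall i, (S i :&: H :&: Pi)%VS = 0%VS),
      (forall i j, i != j ->
         (\dim (S i :&: S j) <= 1)%N /\ (\dim ((S i :&: H) :&: (S j :&: H)) <= 1)%N) &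
      (forall i j, i != j -> \dim ((S i :&: H) :&: (S j :&: H)) = 1%N ->
         quadric_type A ((S i + S j) :&: H)%VS (r - e) 0)].

End QuadricDefs.
Arguments quadric_avsp {F n} r e A U H Pi S.

From HB Require Import structures.
From mathcomp Require Import all_boot all_order all_algebra all_field.
From mathcomp Require Import ring zify.
Import GRing.Theory.
Local Open Scope ring_scope.

(* Let d be the dimension of the generators and H = U cap p^perp.  Since
   p^perp = <p> + H, a vector of H orthogonal to H can be moved by a multiple
   of p into the radical of the whole quadric, so H cap Q is non-degenerate,
   with the generator Sigma_{N+1} cap H.  The section S_i = <p, Sigma_i> cap U
   has dimension d and S_i cap H, the image of a totally singular space of
   p^perp, is a generator of H.  As Sigma_i cap Sigma_j = 0, two sections meet
   only inside H and in at most a point; hence the sets S_i \ H are disjoint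
   and, since N (q^d - q^(d-1)) = q^(r+2) - q^(r+1), they cover U \ H.  When
   S_i and S_j meet in a point, p lies in Sigma_i + Sigma_j, on which the form
   is non-degenerate, and the argument used for H shows that
   (S_i + S_j) cap H is a non-degenerate quadric with generator S_i cap H. *)

Set Implicit Arguments. Unset Strict Implicit. Unset Printing Implicit Defensive.

Section PolarForm.
Variables (F : finFieldType) (n : nat) (A : 'M[F]_n).
Implicit Types (x y z : 'rV[F]_n) (k : F) (X T W Y : {vspace 'rV[F]_n}).

Lemma polarE x y : polar A x y = (x *m (A + A^T) *m y^T) 0 0.
Proof.
have qfT : (y *m A *m x^T) 0 0 = (x *m A^T *m y^T) 0 0.
  transitivity ((y *m A *m x^T)^T 0 0); first by rewrite [RHS]mxE.
  by rewrite !trmx_mul trmxK mulmxA.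
have addE (M N : 'M[F]_1) : (M + N) 0 0 = M 0 0 + N 0 0 by rewrite mxE.
rewrite /polar /qf !mulmxDl !mulmxDr linearD /= !mulmxDr !addE qfT mulmxDl addE.
ring.
Qed.

Lemma polarC x y : polar A x y = polar A y x.
Proof. by rewrite /polar [y + x]addrC; ring. Qed.

Lemma polarDl x y z : polar A (x + y) z = polar A x z + polar A y z.
Proof. by rewrite !polarE !mulmxDl mxE. Qed.

Lemma polarZl k x z : polar A (k *: x) z = k * polar A x z.
Proof. by rewrite !polarE -!scalemxAl mxE. Qed.

Lemma polarDr x y z : polar A z (x + y) = polar A z x + polar A z y.
Proof. by rewrite ![polar A z _]polarC polarDl. Qed.

Lemma polarZr k x z : polar A z (k *: x) = k * polar A z x.
Proof. by rewrite ![polar A z _]polarC polarZl. Qed.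

Lemma polarBl x y z : polar A (x - y) z = polar A x z - polar A y z.
Proof. by rewrite polarDl -scaleN1r polarZl mulN1r. Qed.

Lemma polarBr x y z : polar A z (x - y) = polar A z x - polar A z y.
Proof. by rewrite ![polar A z _]polarC polarBl. Qed.

Lemma polar0r z : polar A z 0 = 0.
Proof. by rewrite -(scale0r 0) polarZr mul0r. Qed.

Lemma qfD x y : qf A (x + y) = qf A x + qf A y + polar A x y.
Proof. by rewrite /polar; ring. Qed.

Lemma qfZ k x : qf A (k *: x) = k ^+ 2 * qf A x.
Proof. by rewrite /qf -!scalemxAl linearZ /= -scalemxAr !mxE mulrA expr2. Qed.

Lemma tsing_polar T x y : tsing A T -> x \in T -> y \in T -> polar A x y = 0.
Proof. by move=> hT hx hy; rewrite /polar !hT ?memvD // !subr0. Qed.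

Lemma perpP X y :
  reflect (forall x, x \in X -> polar A x y = 0) (y \in perp A X).
Proof.
apply: (iffP idP) => [|h]; last first.
  apply: memv_span; rewrite mem_filter mem_enum andbT.
  by apply/forallP => x; apply/implyP => hx; apply/eqP; apply: h.
rewrite /perp; have : {in filter (fun y => [forall x, (x \in X) ==> (polar A x y == 0)])
                     (enum 'rV[F]_n), forall a x, x \in X -> polar A x a = 0}.
  by move=> a; rewrite mem_filter => /andP [/forallP h _] x hx; apply/eqP/(implyP (h x)).
elim: (filter _ _) y => [|a s IH] y hs.
  by rewrite span_nil memv0 => /eqP -> x _; rewrite polar0r.
rewrite span_cons => /memv_addP [u /vlineP [k ->] [v hv ->]] x hx.
rewrite polarDr polarZr (IH v) //; last by move=> b hb; apply: hs; rewrite inE hb orbT.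
by rewrite (hs a) ?inE ?eqxx // mulr0 addr0.
Qed.

Lemma memv_perp_line p y : (y \in perp A <[p]>) = (polar A p y == 0).
Proof.
apply/perpP/eqP => [h | h x /vlineP [k ->]]; first exact/h/memv_line.
by rewrite polarZl h mulr0.
Qed.

(* The correction [x - mu p] is chosen so as to be orthogonal to [y0]; every
   other vector of [Y] differs from a multiple of [y0] by a vector of
   [Y :&: p^perp], which [x] and [p] both annihilate. *)
Lemma polar_sub_line p x y0 Y W :
    y0 \in Y -> polar A p y0 != 0 ->
    (forall y, y \in Y -> polar A p y = 0 -> y \in (<[p]> + W)%VS) ->
    polar A p x = 0 -> (forall u, u \in W -> polar A x u = 0) ->
  forall y, y \in Y -> polar A (x - (polar A x y0 / polar A p y0) *: p) y = 0.
Proof.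
move=> hy0Y hy0 hYW hxp hxW y hy.
set mu := polar A p y / polar A p y0.
have hpy : polar A p (y - mu *: y0) = 0 by rewrite polarBr polarZr divfK // subrr.
have hxy : polar A x (y - mu *: y0) = 0.
  have /memv_addP [_ /vlineP [c ->] [u hu ->]] := hYW _ (memvB hy (memvZ _ hy0Y)) hpy.
  by rewrite polarDr polarZr polarC hxp mulr0 add0r hxW.
move: hxy hpy; rewrite !polarBr !polarZr => /subr0_eq hxy /subr0_eq hpy.
by rewrite polarBl polarZl hxy hpy /mu; field.
Qed.

End PolarForm.

Section Generators.
Variables (F : finFieldType) (n : nat) (A : 'M[F]_n).
Implicit Types (s t z : 'rV[F]_n) (T W G : {vspace 'rV[F]_n}).

Lemma generator_dim W G G' : generator A W G -> generator A W G' -> \dim G' = \dim G.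
Proof.
case=> GW hG hGmax [G'W hG' hG'max].
by apply/eqP; rewrite eqn_leq hGmax // hG'max.
Qed.

Lemma tsing_addv_line T t : tsing A T -> qf A t = 0 ->
  (forall s, s \in T -> polar A t s = 0) -> tsing A (T + <[t]>).
Proof.
move=> hT ht hTt x /memv_addP [s hs [w /vlineP [k ->] ->]].
by rewrite qfD qfZ ht hT // polarZr polarC hTt // !mulr0 !addr0.
Qed.

Lemma generator_maximal W G t : generator A W G -> t \in W -> qf A t = 0 ->
  (forall s, s \in G -> polar A t s = 0) -> t \in G.
Proof.
case=> GW hG hGmax tW ht htG.
have GtW : (G + <[t]> <= W)%VS by rewrite subv_add GW -memvE.
have /eqP -> : (G == G + <[t]>)%VS.
  by rewrite eqEdim addvSl; apply: hGmax => //; apply: tsing_addv_line.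
by rewrite memvE addvSr.
Qed.

Lemma addv_generators_nondeg W G1 G2 z :
  generator A W G1 -> generator A W G2 -> (G1 :&: G2 = 0)%VS ->
  z \in (G1 + G2)%VS -> (forall y, y \in (G1 + G2)%VS -> polar A z y = 0) -> z = 0.
Proof.
move=> hG1 hG2 G12 /memv_addP [s hs [t ht ->]] hz.
have [[G1W tsG1 _] [G2W tsG2 _]] := (hG1, hG2).
have in12 w : w \in G1 -> w \in G2 -> w = 0.
  by move=> h1 h2; apply/eqP; rewrite -memv0 -G12 memv_cap h1.
have ht1 : t \in G1.
  apply: generator_maximal (subvP G2W _ ht) (tsG2 _ ht) _ => // s' hs'.
  rewrite -[t](addKr s) addrC polarBl hz ?(subvP (addvSl G1 G2)) //.
  by rewrite (tsing_polar tsG1 hs hs') subr0.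
have hs2 : s \in G2.
  apply: generator_maximal (subvP G1W _ hs) (tsG1 _ hs) _ => // s' hs'.
  rewrite -[s](addrK t) polarBl hz ?(subvP (addvSr G1 G2)) //.
  by rewrite (tsing_polar tsG2 ht hs') subr0.
by rewrite (in12 _ ht1 ht) (in12 _ hs hs2) addr0.
Qed.

End Generators.

Lemma cover_of_disjoint_card (I T : finType) (A : I -> {set T}) (B : {set T}) :
    (forall i, A i \subset B) -> (forall i j x, x \in A i -> x \in A j -> i = j) ->
    \sum_i #|A i| = #|B| ->
  forall x, x \in B -> exists i, x \in A i.
Proof.
move=> sAB disjA sumA.
pose D := [set ix : I * T | ix.2 \in A ix.1].
have cardD : #|D| = \sum_i #|A i|.
  rewrite -sum1_card big_mkcond (eq_bigr (fun i => \sum_x (x \in A i : nat))).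
    by rewrite pair_big; apply: eq_bigr => -[i x] _; rewrite inE; case: (_ \in _).
  by move=> i _; rewrite -sum1_card big_mkcond; apply: eq_bigr => x _; case: (_ \in _).
have injD : {in D &, injective snd}.
  by move=> [i x] [j y]; rewrite !inE /= => hx hy exy; rewrite exy (disjA i j y) // -exy.
have /eqP imD : snd @: D == B.
  rewrite eqEcard card_in_imset // cardD sumA leqnn andbT.
  by apply/subsetP => _ /imsetP [[i x] /[!inE] /= /(subsetP (sAB i)) ? ->].
by move=> x; rewrite -imD => /imsetP [[i y] /[!inE] /= hy ->]; exists i.
Qed.

Section RowSpaces.
Variables (F : finFieldType) (n : nat).
Implicit Types (S H : {vspace 'rV[F]_n}).

Lemma dim_fullv : \dim (fullv : {vspace 'rV[F]_n}) = n.
Proof. by rewrite dimvf /dim /= mul1n. Qed.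

Lemma card_vspace_setD S H :
  #|[set x in S] :\: [set x in H]| = (#|F| ^ \dim S - #|F| ^ \dim (S :&: H))%N.
Proof.
rewrite cardsD; have -> : [set x in S] :&: [set x in H] = [set x in (S :&: H)%VS].
  by apply/setP => x; rewrite !inE memv_cap.
by rewrite !cardsE !card_vspace.
Qed.

End RowSpaces.

Section Projection.
Variables (F : finFieldType) (n : nat) (A : 'M[F]_n.+2).
Variables (p : 'rV[F]_n.+2) (U S0 : {vspace 'rV[F]_n.+2}).
Hypotheses (hnd : nondeg_on A fullv) (hS0 : generator A fullv S0)
  (hp : p != 0) (hpS0 : p \in S0) (hdU : \dim U = n.+1) (hpU : p \notin U).
Local Notation H := (U :&: perp A <[p]>)%VS.
Local Notation d := (\dim S0).
Implicit Types (x y : 'rV[F]_n.+2) (T Sg : {vspace 'rV[F]_n.+2}).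

Lemma tsing_dim_le T : tsing A T -> (\dim T <= d)%N.
Proof. by case: hS0 => _ _; apply; rewrite subvf. Qed.

Lemma dim_S0_gt0 : (0 < d)%N.
Proof. by rewrite lt0n dimv_eq0; apply: contraNneq hp => S00; rewrite -memv0 -S00. Qed.

Lemma qf_p : qf A p = 0.
Proof. by case: hS0 => _ h _; apply: h. Qed.

Lemma polar_pp : polar A p p = 0.
Proof. by case: hS0 => _ h _; apply: tsing_polar h hpS0 hpS0. Qed.

Lemma polar_p_neq0 : exists y0, polar A p y0 != 0.
Proof.
have [y0 hy0 | hn] := pickP (fun y => polar A p y != 0); first by exists y0.
suff : qf A p != 0 by rewrite qf_p eqxx.
by apply: hnd (memvf p) hp _ => y _; apply/eqP/negbFE/hn.
Qed.

Lemma memU_line_eq0 x c : x \in U -> x = c *: p -> x = 0.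
Proof.
move=> + ex; rewrite ex => cpU; have [-> | c0] := eqVneq c 0; first by rewrite scale0r.
suff : p \in U by rewrite (negbTE hpU).
by rewrite -[p](scalerK c0) memvZ.
Qed.

Lemma dim_addv_line T : (T <= U)%VS -> \dim (T + <[p]>) = (\dim T).+1.
Proof.
move=> TU; have := dimv_sum_cap T <[p]>; rewrite dim_vline hp addn1.
suff -> : (T :&: <[p]> = 0)%VS by rewrite dimv0 addn0.
apply/vspaceP => x; rewrite memv0 memv_cap.
apply/andP/eqP => [[/(subvP TU) xU /vlineP [c]] | ->]; first exact: memU_line_eq0.
by split; apply: mem0v.
Qed.

Lemma addv_U_line : (U + <[p]> = fullv)%VS.
Proof. by apply/eqP; rewrite eqEdim subvf dim_fullv dim_addv_line ?subvv // hdU leqnn. Qed.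

Lemma memv_H y : (y \in H) = (y \in U) && (polar A p y == 0).
Proof. by rewrite memv_cap memv_perp_line. Qed.

Lemma perp_p_sub : (perp A <[p]> <= <[p]> + H)%VS.
Proof.
apply/subvP => y; have /memv_addP [u hu [_ /vlineP [c ->] ->]] : y \in (U + <[p]>)%VS.
  by rewrite addv_U_line memvf.
rewrite memv_perp_line polarDr polarZr polar_pp mulr0 addr0 => hpu.
by rewrite addrC memv_add ?memvZ ?memv_line // memv_H hu.
Qed.

Lemma dim_perp_p : \dim (perp A <[p]>) = n.+1.
Proof.
have [y0 hy0] := polar_p_neq0.
have y00 : y0 != 0 by apply: contraNneq hy0 => ->; rewrite polar0r.
have hcap : (perp A <[p]> :&: <[y0]> = 0)%VS.
  apply/vspaceP => x; rewrite memv0 memv_cap memv_perp_line.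
  apply/andP/eqP => [[hx /vlineP [k ek]] | ->]; last by rewrite polar0r mem0v.
  by move: hx; rewrite ek polarZr mulf_eq0 (negbTE hy0) orbF => /eqP ->; rewrite scale0r.
have hfull : (perp A <[p]> + <[y0]> = fullv)%VS.
  apply/eqP; rewrite eqEdim subvf /=; apply: dimvS; apply/subvP => v _.
  set mu := polar A p v / polar A p y0.
  rewrite -[v](subrK (mu *: y0)) memv_add ?memvZ ?memv_line // memv_perp_line.
  by rewrite polarBr polarZr divfK // subrr.
have := dimv_sum_cap (perp A <[p]>) <[y0]>.
by rewrite hcap hfull dim_fullv dimv0 addn0 dim_vline y00 addn1 => -[].
Qed.

Lemma dim_H : \dim H = n.
Proof.
have hfull : (U + perp A <[p]> = fullv)%VS.
  apply/eqP; rewrite eqEdim subvf /= -addv_U_line dimvS // addvS //.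
  by rewrite -memvE memv_perp_line polar_pp.
have := dimv_sum_cap U (perp A <[p]>).
rewrite hfull dim_fullv dim_perp_p hdU; lia.
Qed.

Lemma tsingH_dim_lt T : tsing A T -> (T <= H)%VS -> (\dim T < d)%N.
Proof.
move=> hT TH; have TU : (T <= U)%VS := subv_trans TH (capvSl _ _).
rewrite -dim_addv_line //; apply/tsing_dim_le/tsing_addv_line => // [|t /(subvP TH)].
  exact: qf_p.
by rewrite memv_H => /andP [_ /eqP].
Qed.

Lemma dim_S0H : (\dim (S0 :&: H)).+1 = d.
Proof.
have -> : (S0 :&: H = S0 :&: U)%VS.
  rewrite capvA; apply/capv_idPl/subvP => x /memv_capP [x0 _].
  by case: hS0 => _ tsS0 _; rewrite memv_perp_line (tsing_polar tsS0 hpS0 x0).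
have hfull : (S0 + U = fullv)%VS.
  apply/eqP; rewrite eqEdim subvf /= -addv_U_line addvC.
  by apply/dimvS/addvS; rewrite // -memvE.
have := dimv_sum_cap S0 U; rewrite hfull dim_fullv hdU; lia.
Qed.

Lemma generator_S0H : generator A H (S0 :&: H).
Proof.
case: hS0 => _ tsS0 _; split; first exact: capvSr.
  by move=> x /memv_capP [/tsS0].
by move=> T TH hT; rewrite -ltnS dim_S0H tsingH_dim_lt.
Qed.

Lemma nondeg_H : nondeg_on A H.
Proof.
move=> x xH x0 hxH; apply/negP => /eqP qx.
have [y0 hy0] := polar_p_neq0.
move: (xH); rewrite memv_H => /andP [xU /eqP hpx].
set z := x - (polar A x y0 / polar A p y0) *: p.
have hz : forall y, y \in fullv -> polar A z y = 0.
  apply: (polar_sub_line (W := H) (memvf y0)) => // y _ /eqP.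
  by rewrite -memv_perp_line => /(subvP perp_p_sub).
have qz : qf A z = 0.
  by rewrite /z qfD qx -scaleNr qfZ qf_p polarZr [polar A x p]polarC hpx !mulr0 !addr0.
have z0 : z != 0.
  by apply: contraNneq x0 => /subr0_eq /(memU_line_eq0 xU) ->.
by have := hnd (memvf z) z0 hz; rewrite qz eqxx.
Qed.

Local Notation proj Sg := ((<[p]> + Sg) :&: U)%VS.

Lemma memv_projP Sg x :
  reflect (x \in U /\ exists a, x - a *: p \in Sg) (x \in proj Sg).
Proof.
rewrite memv_cap; apply: (iffP andP) => [[] | [xU [a hs]]].
  move=> /memv_addP [_ /vlineP [a ->] [s hs ->]] xU.
  by split=> //; exists a; rewrite addrC addKr.
by split=> //; rewrite -[x](subrK (a *: p)) addrC memv_add ?memvZ ?memv_line.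
Qed.

Lemma proj_sub_line Sg s : s \in Sg -> exists c, s - c *: p \in proj Sg.
Proof.
move=> hs; have /memv_addP [u hu [z /vlineP [c ec] esu]] : s \in (U + <[p]>)%VS.
  by rewrite addv_U_line memvf.
exists c; apply/memv_projP; split; first by rewrite esu ec addrK.
by exists (- c); rewrite scaleNr opprK subrK.
Qed.

Section ProjOfGenerator.
Variable Sg : {vspace 'rV[F]_n.+2}.
Hypotheses (hSg : generator A fullv Sg) (hpSg : p \notin Sg).

Lemma dim_proj : \dim (proj Sg) = d.
Proof.
have hcap : (<[p]> :&: Sg = 0)%VS.
  apply/vspaceP => x; rewrite memv0 memv_cap.
  apply/andP/eqP => [[/vlineP [k ->] hk] | ->]; last by split; apply: mem0v.
  have [-> | k0] := eqVneq k 0; first by rewrite scale0r.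
  by move: hpSg; rewrite -[p](scalerK k0) memvZ.
have dim_pSg : \dim (<[p]> + Sg) = d.+1.
  have := dimv_sum_cap <[p]> Sg.
  by rewrite hcap dimv0 addn0 dim_vline hp (generator_dim hS0 hSg) add1n.
have hfull : (<[p]> + Sg + U = fullv)%VS.
  apply/eqP; rewrite eqEdim subvf /= -addv_U_line addvC dimvS //.
  by rewrite subv_add addvSr andbT -addvA addvSl.
have := dimv_sum_cap (<[p]> + Sg) U.
rewrite hfull dim_pSg dim_fullv hdU; lia.
Qed.

Lemma tsing_projH : tsing A (proj Sg :&: H).
Proof.
case: hSg => _ tsSg _ x /memv_capP [/memv_projP [_ [a hs]]].
rewrite -[x](subrK (a *: p)) memv_H polarDr polarZr polar_pp mulr0 addr0.
move=> /andP [_ /eqP hps].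
by rewrite qfD qfZ qf_p tsSg // polarZr polarC hps !mulr0 !addr0.
Qed.

Lemma dim_projH : (\dim (proj Sg :&: H)).+1 = d.
Proof.
apply/eqP; rewrite eqn_leq tsingH_dim_lt ?capvSr //=; last exact: tsing_projH.
have : (\dim (proj Sg + H) <= \dim U)%N by apply/dimvS; rewrite subv_add capvSr capvSl.
rewrite hdU; have := dimv_sum_cap (proj Sg) H; rewrite dim_proj dim_H; lia.
Qed.

Lemma generator_projH : generator A H (proj Sg :&: H).
Proof.
split; [exact: capvSr | exact: tsing_projH |].
by move=> T TH hT; rewrite -ltnS dim_projH tsingH_dim_lt.
Qed.

Lemma proj_not_subH : ~~ (proj Sg <= H)%VS.
Proof.
apply/negP => /capv_idPl projH; have := dim_projH.
by rewrite projH dim_proj => /eqP; rewrite eqn_leq ltnn.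
Qed.

End ProjOfGenerator.

Lemma projH_cap_S0H Sg : (Sg :&: S0 = 0)%VS -> (proj Sg :&: H :&: (S0 :&: H) = 0)%VS.
Proof.
move=> SgS0; apply/vspaceP => x; rewrite memv0; apply/idP/eqP => [|->]; last exact: mem0v.
case/memv_capP => /memv_capP [/memv_projP [xU [a hs]] _] /memv_capP [xS0 _].
have : x - a *: p \in (Sg :&: S0)%VS by rewrite memv_cap hs memvB ?memvZ.
by rewrite SgS0 memv0 => /eqP /subr0_eq /(memU_line_eq0 xU).
Qed.

Section TwoProjs.
Variables Sg1 Sg2 : {vspace 'rV[F]_n.+2}.
Hypotheses (hSg1 : generator A fullv Sg1) (hSg2 : generator A fullv Sg2)
  (hpSg1 : p \notin Sg1) (hpSg2 : p \notin Sg2) (hSg12 : (Sg1 :&: Sg2 = 0)%VS).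

Let in12 w : w \in Sg1 -> w \in Sg2 -> w = 0.
Proof. by move=> h1 h2; apply/eqP; rewrite -memv0 -hSg12 memv_cap h1. Qed.

(* If [x - a p] and [x - b p] are both singular with [a != b], the line they
   span is singular, which forces [x - a p] to be orthogonal to [p]. *)
Lemma proj_cap_memH x : x \in proj Sg1 -> x \in proj Sg2 -> x \in H.
Proof.
case: hSg1 hSg2 => _ tsSg1 _ [_ tsSg2 _].
move=> /memv_projP [xU [a ha]] /memv_projP [_ [b hb]].
rewrite memv_H xU -[x](subrK (a *: p)) polarDr polarZr polar_pp mulr0 addr0.
have [eab | nab] := eqVneq a b; first by rewrite -eab in hb; rewrite (in12 ha hb) polar0r eqxx.
have : qf A (x - b *: p) = 0 by rewrite tsSg2.
have -> : x - b *: p = (x - a *: p) + (a - b) *: p by rewrite scalerBl addrA subrK.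
rewrite qfD qfZ qf_p mulr0 addr0 tsSg1 // add0r polarZr polarC => /eqP.
by rewrite mulf_eq0 subr_eq0 (negbTE nab).
Qed.

Lemma proj_cap_coef_neq x a b : x \in U -> x != 0 ->
  x - a *: p \in Sg1 -> x - b *: p \in Sg2 -> a != b.
Proof.
move=> xU x0 ha hb; apply: contraNneq x0 => eab; rewrite -eab in hb.
by have /subr0_eq /(memU_line_eq0 xU) -> := in12 ha hb.
Qed.

(* For [x] and [x0 != 0] in the meet, a suitable [x - l x0] lies in
   [<[p]> + (Sg1 :&: Sg2)] and in [U], hence is [0]. *)
Lemma dim_proj_cap : (\dim (proj Sg1 :&: proj Sg2) <= 1)%N.
Proof.
have [-> | S12] := eqVneq (proj Sg1 :&: proj Sg2)%VS 0%VS; first by rewrite dimv0.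
set x0 := vpick (proj Sg1 :&: proj Sg2)%VS.
have x0n0 : x0 != 0 by rewrite vpick0.
suff /dimvS : (proj Sg1 :&: proj Sg2 <= <[x0]>)%VS by rewrite dim_vline x0n0.
have /memv_capP [/memv_projP [x0U [a0 ha0]] /memv_projP [_ [b0 hb0]]] :=
  memv_pick (proj Sg1 :&: proj Sg2)%VS.
apply/subvP => x /memv_capP [/memv_projP [xU [a ha]] /memv_projP [_ [b hb]]].
have ab0 : a0 - b0 != 0 by rewrite subr_eq0 (proj_cap_coef_neq x0U x0n0 ha0 hb0).
set l := (a - b) / (a0 - b0).
have w1 : (x - l *: x0) - (a - l * a0) *: p = (x - a *: p) - l *: (x0 - a0 *: p).
  by apply/rowP => i; rewrite !mxE; ring.
have w2 : (x - l *: x0) - (a - l * a0) *: p = (x - b *: p) - l *: (x0 - b0 *: p).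
  have -> : a - l * a0 = b - l * b0 by rewrite /l; field.
  by apply/rowP => i; rewrite !mxE; ring.
have /subr0_eq : (x - l *: x0) - (a - l * a0) *: p = 0.
  by apply: in12; [rewrite w1 | rewrite w2]; rewrite memvB // memvZ.
move/(memU_line_eq0 (memvB xU (memvZ _ x0U)))/subr0_eq => ->.
by rewrite memvZ ?memv_line.
Qed.

Lemma projH_capE : (proj Sg1 :&: H :&: (proj Sg2 :&: H) = proj Sg1 :&: proj Sg2)%VS.
Proof.
apply/vspaceP => x; apply/memv_capP/memv_capP => [[/memv_capP[? _] /memv_capP[? _]] | [x1 x2]].
  by [].
by have xH := proj_cap_memH x1 x2; split; apply/memv_capP.
Qed.

Local Notation Y := (Sg1 + Sg2)%VS.
Local Notation W := ((proj Sg1 + proj Sg2) :&: H)%VS.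

Section MeetingProjs.
Hypothesis hmeet : \dim (proj Sg1 :&: proj Sg2) = 1%N.

Lemma p_in_sum : p \in Y.
Proof.
have S12 : (proj Sg1 :&: proj Sg2)%VS != 0%VS by rewrite -dimv_eq0 hmeet.
have x0n0 : vpick (proj Sg1 :&: proj Sg2) != 0 by rewrite vpick0.
have /memv_capP [/memv_projP [x0U [a0 ha0]] /memv_projP [_ [b0 hb0]]] :=
  memv_pick (proj Sg1 :&: proj Sg2)%VS.
have ab0 : a0 - b0 != 0 by rewrite subr_eq0 (proj_cap_coef_neq x0U x0n0 ha0 hb0).
set x0 := vpick _ in ha0 hb0.
have -> : p = (a0 - b0)^-1 *: (- (x0 - a0 *: p) + (x0 - b0 *: p)).
  by apply/rowP => i; rewrite !mxE; field.
by rewrite memvZ // memv_add // memvN.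
Qed.

Lemma perp_p_sum_sub y : y \in Y -> polar A p y = 0 -> y \in (<[p]> + W)%VS.
Proof.
case/memv_addP => s hs [t ht ->].
have [c1 hu1] := proj_sub_line hs; have [c2 hu2] := proj_sub_line ht.
have e : s + t = (c1 + c2) *: p + ((s - c1 *: p) + (t - c2 *: p)).
  by apply/rowP => i; rewrite !mxE; ring.
rewrite e polarDr polarZr polar_pp mulr0 add0r => hpu.
have uU : (s - c1 *: p) + (t - c2 *: p) \in U.
  by rewrite memvD //; [case/memv_capP: hu1 | case/memv_capP: hu2].
by rewrite memv_add ?memvZ ?memv_line // memv_cap memv_add //= memv_H uU hpu eqxx.
Qed.

Lemma nondeg_W : nondeg_on A W.
Proof.
move=> x xW x0 hxW; apply/negP => _.
have /memv_capP [xS12 /memv_capP [xU /perpP hpx]] := xW.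
have {}hpx : polar A p x = 0 by apply: hpx; apply: memv_line.
have S12Y : (proj Sg1 + proj Sg2 <= Y)%VS.
  have pY : (<[p]> <= Y)%VS by rewrite -memvE p_in_sum.
  have projY Sg : (Sg <= Y)%VS -> (proj Sg <= Y)%VS.
    by move=> SgY; apply: subv_trans (capvSl _ _) _; rewrite subv_add pY.
  by rewrite subv_add !projY ?addvSl ?addvSr.
have Yrad z : z \in Y -> (forall y, y \in Y -> polar A z y = 0) -> z = 0.
  exact: addv_generators_nondeg hSg1 hSg2 hSg12.
have [y0 /andP [y0Y hy0] | hn] := pickP (fun y => (y \in Y) && (polar A p y != 0)).
  set z := x - (polar A x y0 / polar A p y0) *: p.
  have zY : z \in Y by apply: memvB; [exact: (subvP S12Y) | exact/memvZ/p_in_sum].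
  have /subr0_eq /(memU_line_eq0 xU) x00 := Yrad z zY
    (polar_sub_line y0Y hy0 perp_p_sum_sub hpx hxW).
  by rewrite x00 eqxx in x0.
suff p0 : p = 0 by move: hp; rewrite p0 eqxx.
apply: Yrad p_in_sum _ => y yY; apply/eqP; have := hn y; rewrite yY /=.
by move/negbFE.
Qed.

Lemma dim_W : (\dim W).+2 = (d + d)%N.
Proof.
have hsum := dimv_sum_cap (proj Sg1) (proj Sg2).
rewrite hmeet (dim_proj hSg1 hpSg1) (dim_proj hSg2 hpSg2) in hsum.
have hsumH := dimv_sum_cap (proj Sg1 + proj Sg2)%VS H; rewrite dim_H in hsumH.
have hU : (\dim (proj Sg1 + proj Sg2 + H) <= \dim U)%N.
  by apply/dimvS; rewrite !subv_add !capvSr capvSl.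
rewrite hdU in hU.
have hlt : (\dim W < \dim (proj Sg1 + proj Sg2))%N.
  rewrite ltnNge; apply: contra (proj_not_subH hSg1 hpSg1) => le.
  have /eqP WE : (W == proj Sg1 + proj Sg2)%VS by rewrite eqEdim capvSl le.
  by rewrite (subv_trans (addvSl _ (proj Sg2))) // -WE capvSr.
lia.
Qed.

Lemma generator_W : generator A W (proj Sg1 :&: H).
Proof.
split; [by rewrite capvS ?addvSl | exact: tsing_projH |].
move=> T TW hT; rewrite -ltnS (dim_projH hSg1 hpSg1) tsingH_dim_lt //.
exact: subv_trans TW (capvSr _ _).
Qed.

End MeetingProjs.
End TwoProjs.
End Projection.

Section Spread.
Variables (F : finFieldType) (r e : nat) (A : 'M[F]_(r.+3)).
Variables (p : 'rV[F]_(r.+3)) (U : {vspace 'rV[F]_(r.+3)}).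
Local Notation N := (#|F| ^ ((r + e + 1)./2))%N.
Variable Sigma : 'I_N.+1 -> {vspace 'rV[F]_(r.+3)}.
Hypotheses (hQ : quadric_type A fullv r.+2 e) (hgen : forall i, generator A fullv (Sigma i))
  (hdisj : forall i j, i != j -> (Sigma i :&: Sigma j = 0)%VS)
  (hp : p != 0) (hpS0 : p \in Sigma ord_max) (hdU : \dim U = r.+2) (hpU : p \notin U).
Local Notation H := (U :&: perp A <[p]>)%VS.
Local Notation S0 := (Sigma ord_max).
Local Notation d := (\dim S0).
Local Notation Sg i := (Sigma (widen_ord (leqnSn N) i)).
Local Notation S i := ((<[p]> + Sg i) :&: U)%VS.

Let hnd : nondeg_on A fullv. Proof. by case: hQ. Qed.
Let hS0 : generator A fullv S0 := hgen ord_max.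

Lemma Sg_cap_S0 i : (Sg i :&: S0 = 0)%VS.
Proof. by apply: hdisj; rewrite -val_eqE /= neq_ltn ltn_ord. Qed.

Lemma Sg_cap i j : i != j -> (Sg i :&: Sg j = 0)%VS.
Proof. by move=> ij; apply: hdisj; rewrite -val_eqE. Qed.

Lemma p_notin_Sg i : p \notin Sg i.
Proof.
apply: contra hp => hpSg; rewrite -memv0 -(Sg_cap_S0 i); exact/memv_capP.
Qed.

Lemma dim_S0_double : (d + d + e = r.+3)%N.
Proof.
case: hQ => _ _ [G [hG eG]]; rewrite -(generator_dim hG hS0) in eG; lia.
Qed.

Lemma proj_cover x : x \in U -> x \notin H -> exists i, x \in S i.
Proof.
move=> xU xH.
set q := #|F|; set B := [set y in U] :\: [set y in H].
have cardA i : #|[set y in S i] :\: [set y in H]| = (q ^ d - q ^ d.-1)%N.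
  have dS : \dim (S i) = d.
    by apply: dim_proj => //; apply: p_notin_Sg.
  have dSH : (\dim (S i :&: H)).+1 = d.
    by apply: dim_projH => //; apply: p_notin_Sg.
  by rewrite card_vspace_setD dS -dSH.
have dH : \dim H = r.+1 by apply: (dim_H (S0 := S0)).
have cardB : #|B| = (q ^ r.+2 - q ^ r.+1)%N.
  by rewrite card_vspace_setD hdU (capv_idPr (capvSl _ _)) dH.
suff [i] : exists i, x \in [set y in S i] :\: [set y in H].
  by rewrite !inE => /andP [_ ?]; exists i.
apply: (cover_of_disjoint_card (B := B)); last by rewrite !inE xU xH.
- by move=> i; apply: setSD; apply/subsetP => y; rewrite !inE => /memv_capP [].
- move=> i j y; rewrite !inE => /andP [yH yi] /andP [_ yj].
  have [// | ij] := eqVneq i j; case/negP: yH.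
  by move: yi yj; apply: (proj_cap_memH (S0 := S0)) => //; apply: Sg_cap.
- rewrite (eq_bigr _ (fun i _ => cardA i)) sum_nat_const card_ord cardB.
  rewrite mulnBr -!expnD; have := dim_S0_double; have := dim_S0_gt0 hp hpS0.
  by rewrite /q => d0 dd; congr (_ ^ _ - _ ^ _)%N; lia.
Qed.

Lemma proj_avsp : avsp U H (fun i => S i).
Proof.
have dH : \dim H = r.+1 by apply: (dim_H (S0 := S0)).
have hpSg := p_notin_Sg.
split; [exact: capvSl | by rewrite dH hdU | |].
  by move=> i; split; [exact: capvSr | apply: (proj_not_subH (S0 := S0))].
move=> x xU xH; have [i xi] := proj_cover xU xH; exists i; split => // j xj.
have [// | ij] := eqVneq i j; case/negP: xH.
by move: xi xj; apply: (proj_cap_memH (S0 := S0)) => //; apply: Sg_cap.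
Qed.

Lemma proj_meet_quadric_type i j : i != j ->
    \dim (S i :&: H :&: (S j :&: H)) = 1%N ->
  quadric_type A ((S i + S j) :&: H) (r - e) 0.
Proof.
move=> ij hmeetH; have dd := dim_S0_double; have hpSg := p_notin_Sg.
(* A common point forces [d >= 2], which matters since [r - e] is truncated. *)
have meet_le : (\dim (S i :&: H :&: (S j :&: H)) <= \dim (S i :&: H))%N.
  exact/dimvS/capvSl.
rewrite hmeetH in meet_le.
move: hmeetH; rewrite (projH_capE U hS0 hpS0) ?Sg_cap // => hmeet.
have dSH : (\dim (S i :&: H)).+1 = d by apply: dim_projH.
have dW : \dim ((S i + S j) :&: H) = (d.-1 + d.-1)%N.
  have : (\dim ((S i + S j) :&: H)).+2 = (d + d)%N.
    by apply: dim_W => //; apply: Sg_cap.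
  lia.
have {}dSH : \dim (S i :&: H) = d.-1 by lia.
split; first by rewrite dW; lia.
  by apply: (nondeg_W (S0 := S0)) => //; apply: Sg_cap.
exists (S i :&: H)%VS; split; last by rewrite dSH; lia.
by apply: (generator_W (S0 := S0)) => //; apply: Sg_cap.
Qed.

Lemma proj_spread_quadric_avsp : quadric_avsp r e A U H (S0 :&: H)%VS (fun i => S i).
Proof.
have dd := dim_S0_double.
have dS0H : (\dim (S0 :&: H)).+1 = d by apply: dim_S0H.
have hpSg := p_notin_Sg.
split; split; [exact: hdU | exact: proj_avsp | | | exact: generator_S0H | | | |
  exact: proj_meet_quadric_type].
- by move=> i; rewrite (_ : \dim (S i) = d); [lia | apply: dim_proj].
- split; [by apply: (dim_H (S0 := S0)) | exact: (nondeg_H (S0 := S0)) |].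
  by exists (S0 :&: H)%VS; split; [apply: generator_S0H | lia].
- by move=> i; apply: (generator_projH (S0 := S0)).
- by move=> i; apply: projH_cap_S0H; rewrite ?Sg_cap_S0.
- move=> i j ij; rewrite (projH_capE U hS0 hpS0) ?Sg_cap //.
  by split; apply: dim_proj_cap; rewrite ?Sg_cap.
Qed.

End Spread.

Theorem mainTheorem2 (F : finFieldType) (r e : nat) (A : 'M[F]_(r.+3))
  (Sigma : 'I_((#|F| ^ ((r + e + 1)./2)).+1) -> {vspace 'rV[F]_(r.+3)})
  (p : 'rV[F]_(r.+3)) (U : {vspace 'rV[F]_(r.+3)}) :
  (e <= 2)%N -> odd (r + e) ->
  quadric_type A fullv r.+2 e ->
  (forall i, generator A fullv (Sigma i)) ->
  (forall i j, i != j -> (Sigma i :&: Sigma j)%VS = 0%VS) ->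
  p != 0 -> p \in Sigma ord_max ->
  \dim U = r.+2 -> p \notin U ->
  let H := (U :&: perp A <[p]>)%VS in
  quadric_avsp r e A U H (Sigma ord_max :&: H)%VS
    (fun i => ((<[p]> + Sigma (widen_ord (leqnSn _) i)) :&: U)%VS).
Proof. by move=> _ _ hQ hgen hdisj hp hpS hdU hpU H; exact: proj_spread_quadric_avsp. Qed.
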